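(* Let $X$, $Z$ be topological vector spaces, $C\subseteq Z$ a nonempty closed convex cone with $C^-\neq\{0\}$, $f:X\to\mathcal{F}(Z,C)$ and $x_0\in X$. If there is $z_0\in Z$ with $(x_0,z_0)\in\operatorname{Int}(\operatorname{gr}f)$, then $f$ is lattice-bounded above on some neighborhood of $x_0$. If $\operatorname{Int}C\neq\emptyset$, then conversely, if $f$ is lattice-bounded above on some neighborhood of $x_0$, there is $z_0\in Z$ with $(x_0,z_0)\in\operatorname{Int}(\operatorname{gr}f)$.
   Context: $\mathcal{F}(Z,C)=\{A\subseteq Z\colon A=\operatorname{cl}(A+C)\}$ (empty set included); $C^-=\{z^*\in Z^*\colon z^*(z)\le0\ \forall z\in C\}$. $\operatorname{gr}f=\{(x,z)\in X\times Z\colon z\in f(x)\}$, with interior taken in the product topology. $f$ is lattice-bounded above on $M\subseteq X$ iff there is $a\in Z$ with $a\in f(x)$ for all $x\in M$. *)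

From HB Require Import structures.
From mathcomp Require Import all_boot all_order all_algebra.
From mathcomp Require Import all_classical all_reals all_analysis.
Set Implicit Arguments. Unset Strict Implicit. Unset Printing Implicit Defensive.
Import Order.TTheory GRing.Theory Num.Theory.
Import numFieldTopology.Exports.
Local Open Scope classical_set_scope.
Local Open Scope ring_scope.

Section Defs.
Context {R : realType}.

Definition is_cone (Z : lmodType R) (C : set Z) : Prop :=
  forall (t : R) (z : Z), 0 < t -> C z -> C (t *: z).

Definition is_convex_set (Z : lmodType R) (C : set Z) : Prop :=
  forall (t : R) (x y : Z), 0 <= t <= 1 -> C x -> C y -> C (t *: x + (1 - t) *: y).

Definition msum (Z : lmodType R) (A B : set Z) : set Z :=
  [set z | exists a b, A a /\ B b /\ z = a + b].

Definition in_FZC (Z : topologicalLmodType R) (C A : set Z) : Prop :=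
  A = closure (msum A C).

Definition is_cont_linear_functional (Z : topologicalLmodType R) (g : Z -> R) : Prop :=
  (forall (a : R) (x y : Z), g (a *: x + y) = a * g x + g y) /\ continuous g.

Definition neg_dual_cone (Z : topologicalLmodType R) (C : set Z) : set (Z -> R) :=
  [set g | is_cont_linear_functional g /\ forall z, C z -> g z <= 0].

Definition graph_sv (X Z : Type) (f : X -> set Z) : set (X * Z) :=
  [set p | f p.1 p.2].

Definition lattice_bounded_above (X Z : Type) (f : X -> set Z) (M : set X) : Prop :=
  exists a : Z, forall x, M x -> f x a.

End Defs.

From HB Require Import structures.
From mathcomp Require Import all_boot all_order all_algebra.
From mathcomp Require Import all_classical all_reals all_analysis.
Import Order.TTheory GRing.Theory Num.Theory.
Import numFieldTopology.Exports.
Local Open Scope classical_set_scope.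
Local Open Scope ring_scope.

(* Every value A of f satisfies A + C ⊆ A, so a lattice bound a is also a
   bound for every point of a + C.  Forward direction: a product neighbourhood
   P × Q of (x0, z0) inside the graph makes z0 a bound on P.  Converse: for c
   in Int C, the translate a + C is a neighbourhood of a + c, and M × (a + C)
   lies in the graph.  Neither direction uses closedness, convexity or the
   dual cone condition. *)

Lemma in_FZC_addr (R : realType) (Z : topologicalLmodType R) (C A : set Z)
    (a c : Z) :
  in_FZC C A -> A a -> C c -> A (a + c).
Proof.
move=> AE Aa Cc; rewrite AE; apply: subset_closure.
by exists a, c.
Qed.

Lemma interior_graph_nbhs_fiber (X Z : topologicalType) (f : X -> set Z)
    (x0 : X) (z0 : Z) :
  interior (graph_sv f) (x0, z0) -> nbhs x0 [set x | f x z0].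
Proof.
case=> [[P Q]] /= [nP nQ] PQ_graph.
apply: filterS nP => x Px.
by apply: (PQ_graph (x, z0)); split => //; exact: nbhs_singleton.
Qed.

Lemma lattice_bound_interior_graph (R : realType)
    (X Z : topologicalLmodType R)
    (C : set Z) (f : X -> set Z) (x0 : X) (M : set X) (a c : Z) :
  (forall x, in_FZC C (f x)) -> nbhs x0 M -> (forall x, M x -> f x a) ->
  interior C c -> interior (graph_sv f) (x0, a + c).
Proof.
move=> fFZC nM Ma nCc.
have naC := @nbhsB_subproof _ _ C (@add_continuous Z) c a nCc.
exists (M, +%R a @` C) => //.
case=> x z /= [Mx [c' Cc' <-]].
exact: in_FZC_addr (Ma x Mx) Cc'.
Qed.

Theorem mainTheorem11 (R : realType) (X Z : topologicalLmodType R)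
  (C : set Z) (f : X -> set Z) (x0 : X) :
  C !=set0 -> closed C -> is_cone C -> is_convex_set C ->
  neg_dual_cone C <> [set (fun _ : Z => 0 : R)] ->
  (forall x, in_FZC C (f x)) ->
  ((exists z0 : Z, interior (graph_sv f) (x0, z0)) ->
     exists M : set X, nbhs x0 M /\ lattice_bounded_above f M) /\
  (interior C !=set0 ->
     (exists M : set X, nbhs x0 M /\ lattice_bounded_above f M) ->
     exists z0 : Z, interior (graph_sv f) (x0, z0)).
Proof.
move=> _ _ _ _ _ fFZC; split.
  move=> [z0 /interior_graph_nbhs_fiber nfiber].
  by exists [set x | f x z0]; split => //; exists z0.
move=> [c nCc] [M [nM [a Ma]]].
by exists (a + c); exact: lattice_bound_interior_graph nM Ma nCc.
Qed.
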